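(* Let $a>0$ be the absolute constant such that for every $0<\eta\le1/2$ and every $m\le\exp(a\eta^2 d_k)$ there exist unit vectors $u_1,\dots,u_m\in\mathbb{R}^{d_k}$ with $\langle u_i,u_h\rangle\le\eta$ for all $i\ne h$. Fix dimensions $d,d_k>1$, $\rho\ge2$, let $L=e^\rho$, and let $0<\varepsilon\le\varepsilon_0$ for a sufficiently small absolute constant $\varepsilon_0$. Suppose there is a (possibly randomized) sketching algorithm that, for any input collection of pairs $(K,V)$ with keys $k_i\in\mathbb{R}^{d_k}$, values $v_i\in\mathbb{R}^d$, $\|k_i\|_2,\|v_i\|_2\le1$, produces a sketch $\mathrm{Attn}'(\cdot)$ of size $S$ (in bits) such that for any $q\in\mathbb{R}^{d_k}$ with $\|q\|_2\le\rho$, with constant probability, \[ \|\mathrm{Attn}(q,K,V)-\mathrm{Attn}'(q)\|_2\le\varepsilon. \] Then \[ S=\Omega\!\left(d\cdot\min\{L/\varepsilon,\;L^2,\;\exp(a d_k/\log^2L)\}\right). \]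
   Context: $\mathrm{Attn}(q,K,V)=\dfrac{\sum_i e^{q^Tk_i}v_i}{\sum_i e^{q^Tk_i}}$. A sketch is a data structure computed from $(K,V)$ from which a function $\mathrm{Attn}'(q)$ of queries $q$ can be evaluated. *)

From HB Require Import structures.
From mathcomp Require Import all_boot all_order all_algebra.
From mathcomp Require Import all_classical all_reals all_analysis.
Set Implicit Arguments. Unset Strict Implicit. Unset Printing Implicit Defensive.
Import Order.TTheory GRing.Theory Num.Theory.
Local Open Scope ring_scope.

Definition dotv {R : realType} {n : nat} (u v : 'rV[R]_n) : R :=
  \sum_(j < n) u 0 j * v 0 j.

Definition norm2 {R : realType} {n : nat} (u : 'rV[R]_n) : R :=
  Num.sqrt (dotv u u).

Definition Attn {R : realType} {dk d n : nat} (q : 'rV[R]_dk)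
  (K : 'I_n -> 'rV[R]_dk) (V : 'I_n -> 'rV[R]_d) : 'rV[R]_d :=
  (\sum_(i < n) expR (dotv q (K i)))^-1 *: \sum_(i < n) expR (dotv q (K i)) *: V i.

Definition packing_constant {R : realType} (a : R) : Prop :=
  forall (dk : nat) (eta : R), (0 < dk)%N -> 0 < eta -> eta <= 1 / 2 ->
  forall m : nat, m%:R <= expR (a * eta ^+ 2 * dk%:R) ->
  exists u : 'I_m -> 'rV[R]_dk,
    (forall i, norm2 (u i) = 1) /\
    (forall i h, i != h -> dotv (u i) (u h) <= eta).

(* A randomized sketching scheme with public randomness omega drawn from the
   probability P, sketch = bit string of at most S bits, which succeeds
   (error <= eps) for every input and every query of norm <= rho with
   probability at least 2/3 (the success event contains a measurable set of
   probability >= 2/3, so no measurability assumption is imposed). *)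
Definition valid_sketch {R : realType} (dm : measure_display) (Omega : measurableType dm)
  (P : probability Omega R) (d dk : nat) (rho eps : R) (S : nat)
  (enc : forall n : nat, Omega -> ('I_n -> 'rV[R]_dk) -> ('I_n -> 'rV[R]_d) -> seq bool)
  (dec : Omega -> seq bool -> 'rV[R]_dk -> 'rV[R]_d) : Prop :=
  (forall n omega K V, (size (enc n omega K V) <= S)%N) /\
  (forall (n : nat) (K : 'I_n -> 'rV[R]_dk) (V : 'I_n -> 'rV[R]_d) (q : 'rV[R]_dk),
     (0 < n)%N ->
     (forall i, norm2 (K i) <= 1) -> (forall i, norm2 (V i) <= 1) ->
     norm2 q <= rho ->
     exists A : set Omega, measurable A /\
       (A `<=` [set omega | norm2 (Attn q K V - dec omega (enc n omega K V) q) <= eps])%classic /\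
       ((2 / 3 : R)%:E <= P A)%E).

(** Take N ~ min(L/eps, L^2, exp(a d_k/rho^2)) / 10^4 unit keys u_i with pairwise inner
    products at most 1/rho, and let the values carry N*d random signs x(i,c), scaled by
    1/sqrt d.  The query rho u_j puts weight L = e^rho on key j and at most e <= 4 on every
    other key, so coordinate c of Attn(rho u_j) is (L x(j,c)/sqrt d + crosstalk) / Z_j, where
    Z_j is the softmax normaliser [partition j].  Over random signs the crosstalk has second
    moment at most 16(N-1)/d <= L^2/(10^4 d), and since eps Z_j <= 14 L / 10^4 an eps-accurate
    answer leaves the margin on very few coordinates.  Fixing a seed of the sketch that
    answers 2/3 of all (signs, query) pairs, the S-bit sketch then determines 5/8 of the N*d
    bits on average over the signs, and a Chernoff-type count shows that no S-bit encoding
    can do this unless N*d <= 576 S. *)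

From HB Require Import structures.
From mathcomp Require Import all_boot all_order all_algebra.
From mathcomp Require Import all_classical all_reals all_analysis.
From mathcomp Require Import measurable_realfun.
From mathcomp Require Import zify ring lra.
Import Order.TTheory GRing.Theory Num.Theory.
Local Open Scope ring_scope.

Set Implicit Arguments. Unset Strict Implicit. Unset Printing Implicit Defensive.

Section BooleanCube.
Variables (R : realFieldType) (I : finType).
Local Notation cube := {ffun I -> bool}.

Definition flip_at (a : I) (x : cube) : cube :=
  [ffun i => if i == a then ~~ x i else x i].

Definition flip_all (x : cube) : cube := [ffun i => ~~ x i].

Lemma flip_atK a : involutive (flip_at a).
Proof. by move=> x; apply/ffunP => i; rewrite !ffunE; case: eqP => //; rewrite negbK. Qed.

Lemma flip_allK : involutive flip_all.
Proof. by move=> x; apply/ffunP => i; rewrite !ffunE negbK. Qed.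

Lemma card_cube : #|cube|%:R = 2 ^+ #|I| :> R.
Proof. by rewrite card_ffun card_bool natrX. Qed.

Lemma sum_cube_const (c : R) : \sum_(x : cube) c = c * 2 ^+ #|I|.
Proof. by rewrite sumr_const -card_cube mulr_natr. Qed.

Definition signb (b : bool) : R := if b then 1 else -1.

Lemma signb_sqr b : signb b ^+ 2 = 1.
Proof. by case: b; rewrite /signb ?sqrrN expr1n. Qed.

Lemma sum_signb_mul a b :
  \sum_(x : cube) signb (x a) * signb (x b) = (a == b)%:R * 2 ^+ #|I|.
Proof.
have [<-|neq_ab] := eqVneq a b.
  rewrite mul1r (eq_bigr (fun=> 1)) ?sum_cube_const ?mul1r // => x _.
  by rewrite -expr2 signb_sqr.
rewrite mul0r; apply/eqP; rewrite -[_ == 0](mulrn_eq0 _ 2) mulr2n.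
rewrite {2}(reindex_inj (can_inj (flip_atK a))) -big_split /= big1 // => x _.
rewrite !ffunE eqxx eq_sym (negbTE neq_ab).
by rewrite -mulrDl; case: (x a); rewrite /signb /= ?addrN ?addNr mul0r.
Qed.

Lemma sum_cube_signb_comb_sqr (J : finType) (P : pred J) (a : J -> R) (f : J -> I) :
  injective f ->
  \sum_(x : cube) (\sum_(i | P i) a i * signb (x (f i))) ^+ 2 =
  2 ^+ #|I| * \sum_(i | P i) a i ^+ 2.
Proof.
move=> inj_f.
have pair_sum i k : \sum_(x : cube) a i * signb (x (f i)) * (a k * signb (x (f k))) =
    a i * a k * ((f i == f k)%:R * 2 ^+ #|I|).
  by rewrite -sum_signb_mul mulr_sumr; apply: eq_bigr => x _; ring.
under eq_bigr do rewrite expr2 big_distrlr /=.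
rewrite exchange_big mulr_sumr; apply: eq_bigr => i Pi.
rewrite exchange_big (eq_bigr _ (fun k _ => pair_sum i k)) (bigD1 i) //= eqxx big1.
  by rewrite addr0 mul1r mulrC expr2.
by move=> k /andP[_ neq_ki]; rewrite (inj_eq inj_f) eq_sym (negbTE neq_ki) mul0r mulr0.
Qed.

Definition agree (g x : cube) : nat := #|[pred i | g i == x i]|.

Lemma agreeE g x : (agree g x)%:R = \sum_i (g i == x i)%:R :> R.
Proof.
rewrite /agree -sum1_card natr_sum big_mkcond.
by apply: eq_bigr => i _; rewrite inE; case: eqP.
Qed.

Lemma agree_le g x : (agree g x <= #|I|)%N.
Proof. exact: max_card. Qed.

Lemma agree_flip_all g x : (agree g x + agree g (flip_all x))%N = #|I|.
Proof.
rewrite -(cardC [pred i | g i == x i]); congr (_ + _)%N.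
by apply: eq_card => i; rewrite !inE ffunE; case: (g i); case: (x i).
Qed.

Lemma sum_agree g : \sum_(x : cube) (agree g x)%:R = #|I|%:R * 2 ^+ #|I| / 2 :> R.
Proof.
apply: (canRL (mulfK _)); first by rewrite pnatr_eq0.
rewrite mulr_natr mulr2n {2}(reindex_inj (can_inj flip_allK)) -big_split /=.
under eq_bigr => x _ do rewrite -natrD agree_flip_all.
by rewrite sum_cube_const mulr_natl.
Qed.

Lemma sum_expr_agree (lam : R) g :
  \sum_(x : cube) lam ^+ agree g x = (1 + lam) ^+ #|I|.
Proof.
have prodE x : lam ^+ agree g x = \prod_i (if g i == x i then lam else 1).
  by rewrite /agree -prodr_const [LHS]big_mkcond; apply: eq_bigr => i _; rewrite inE.
under eq_bigr => x _ do rewrite prodE.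
rewrite -(bigA_distr_bigA (fun i b => if g i == b then lam else 1)) -prodr_const.
by apply: eq_bigr => i _; rewrite big_bool; case: (g i); rewrite // addrC.
Qed.

End BooleanCube.

Lemma exprn_ge1Dmx (R : realDomainType) (x : R) n :
  0 <= x -> 1 + n%:R * x <= (1 + x) ^+ n.
Proof.
move=> x_ge0; elim: n => [|n IHn]; first by rewrite mul0r addr0.
have : 0 <= n%:R * x by rewrite mulr_ge0.
rewrite exprS -nat1r mulrDl mul1r; nra.
Qed.

Lemma sum_expn2 k : (\sum_(i < k) 2 ^ i)%N = (2 ^ k).-1.
Proof.
elim: k => [|k IHk]; first by rewrite big_ord0.
by rewrite big_ord_recr /= IHk expnS; have := expn_gt0 2 k; lia.
Qed.

Lemma card_bseq_bool S : (#|{bseq S of bool}| < 2 ^ S.+1)%N.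
Proof. by rewrite card_bseq card_bool sum_expn2 prednK ?expn_gt0. Qed.

Lemma div64_le_of_expr_le (R : realFieldType) n k :
  (65 / 64 : R) ^+ n <= 2 ^+ k -> (n %/ 64 <= k)%N.
Proof.
move=> le_k; rewrite -(ler_eXn2l (x := 2 : R)) ?ltr1n //; apply: le_trans le_k.
have two_le : 2 <= (65 / 64 : R) ^+ 64.
  have := @exprn_ge1Dmx _ (1 / 64 : R) 64 (divr_ge0 ler01 (ler0n _ _)).
  by rewrite mul1r divff ?pnatr_eq0 // (_ : 1 + 64^-1 = 65 / 64 :> R) //; lra.
apply: (@le_trans _ _ (((65 / 64 : R) ^+ 64) ^+ (n %/ 64))).
  by apply: lerXn2r; rewrite // nnegrE; lra.
by rewrite -exprM ler_weXn2l 1?mulnC ?leq_trunc_div //; lra.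
Qed.

Section Compression.
Variables (R : realFieldType) (I M : finType).
Local Notation cube := {ffun I -> bool}.
Local Notation n := #|I|.

Lemma chernoff_agree (mu : R) (p q : nat) (g : cube) : 1 <= mu ->
  (\sum_(x : cube) (p * n <= q * agree g x)%N%:R) * mu ^+ (p * n) <= (1 + mu ^+ q) ^+ n.
Proof.
move=> mu_ge1; have mu_ge0 : 0 <= mu := le_trans ler01 mu_ge1.
rewrite -(sum_expr_agree _ g) mulr_suml; apply: ler_sum => x _.
case: leqP => [le_pq|_] /=; last by rewrite mul0r !exprn_ge0.
by rewrite mul1r -exprM ler_weXn2l.
Qed.

Variables (f : cube -> M) (g : M -> cube).

Let good x := (3 * n <= 5 * agree (g (f x)) x)%N.

Lemma sum_good_ge : (0 < n)%N ->
  5 / 8 * n%:R * 2 ^+ n <= \sum_(x : cube) (agree (g (f x)) x)%:R :> R ->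
  2 ^+ n / 40 <= \sum_(x : cube) (good x)%:R :> R.
Proof.
move=> n_gt0 avg.
have agree_le_good x : (agree (g (f x)) x)%:R <= (good x)%:R * n%:R + 3 / 5 * n%:R :> R.
  have n_ge0 : 0 <= n%:R :> R := ler0n _ _.
  have := agree_le (g (f x)) x; rewrite -(ler_nat R) /good.
  case: leqP => [_|lt_3n] /= le_n; first by rewrite mul1r; lra.
  have : (5 * agree (g (f x)) x)%:R < (3 * n)%:R :> R by rewrite ltr_nat.
  by rewrite !natrM mul0r add0r; lra.
have := le_trans avg (ler_sum _ (fun x _ => agree_le_good x)).
rewrite big_split /= -mulr_suml sum_cube_const => le_sum.
rewrite -(ler_pM2r (_ : 0 < n%:R)) ?ltr0n //; lra.
Qed.

Lemma sum_good_le (mu : R) : 1 <= mu ->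
  (\sum_(x : cube) (good x)%:R) * mu ^+ (3 * n) <= #|M|%:R * (1 + mu ^+ 5) ^+ n.
Proof.
move=> mu_ge1; rewrite (partition_big f xpredT) //= mulr_suml mulr_natl -sumr_const.
apply: ler_sum => m _; apply: le_trans (chernoff_agree 3 5 (g m) mu_ge1).
rewrite ler_wpM2r ?exprn_ge0 // ?(le_trans ler01) //.
rewrite (eq_bigr (fun x => (3 * n <= 5 * agree (g m) x)%:R)); last first.
  by move=> x /eqP fx_m; rewrite /good fx_m.
by rewrite [X in _ <= X](bigID (fun x => f x == m)) /= lerDl sumr_ge0.
Qed.

Lemma compression : (0 < n)%N ->
  5 / 8 * n%:R * 2 ^+ n <= \sum_(x : cube) (agree (g (f x)) x)%:R :> R ->
  (65 / 64) ^+ n <= 40 * #|M|%:R :> R.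
Proof.
move=> n_gt0 /(sum_good_ge n_gt0) many_good.
pose mu : R := 11 / 10.
have mu_ge1 : 1 <= mu by rewrite /mu; lra.
have lam_gt0 : 0 < (1 + mu ^+ 5) ^+ n by rewrite exprn_gt0 // /mu; lra.
have base : 65 / 64 * (1 + mu ^+ 5) <= 2 * mu ^+ 3 by rewrite /mu; lra.
rewrite -(ler_pM2r lam_gt0) -exprMn.
apply: (@le_trans _ _ ((2 * mu ^+ 3) ^+ n)).
  by apply: lerXn2r => //; rewrite nnegrE /mu; lra.
rewrite exprMn -exprM -mulrA.
have mu3_ge0 : 0 <= mu ^+ (3 * n) by rewrite exprn_ge0 // (le_trans ler01).
have := le_trans (ler_wpM2r mu3_ge0 many_good) (sum_good_le mu_ge1).
lra.
Qed.

End Compression.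

Lemma encoding_length (R : realFieldType) (I : finType) (S : nat)
    (f : {ffun I -> bool} -> seq bool) (g : seq bool -> {ffun I -> bool}) :
  (forall x, size (f x) <= S)%N ->
  5 / 8 * #|I|%:R * 2 ^+ #|I| <= \sum_x (agree (g (f x)) x)%:R :> R ->
  (#|I| <= 576 * S)%N.
Proof.
move=> f_le avg; have [->|n_gt0] := posnP #|I|; first by [].
have [S0|S_gt0] := posnP S.
  (* the decoded guess is then a single point, which agrees with half the bits on average *)
  have fE x : f x = [::] by apply/eqP; rewrite -size_eq0 -leqn0 -S0.
  have : 0 < #|I|%:R * 2 ^+ #|I| :> R by rewrite mulr_gt0 ?ltr0n ?exprn_gt0.
  by move: avg; under eq_bigr => x _ do rewrite fE; rewrite sum_agree; lra.
pose f' x : {bseq S of bool} := insub_bseq S (f x).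
have f'E x : val (f' x) = f x by apply: insubdK; exact: f_le.
have : (65 / 64 : R) ^+ #|I| <= 2 ^+ (7 + S).
  apply: le_trans (@compression R I _ f' (g \o val) n_gt0 _) _.
    by under eq_bigr => x _ do rewrite /= f'E.
  have := ltnW (card_bseq_bool S); rewrite -(ler_nat R) natrX exprD !exprS expr0.
  have : 0 < (2 : R) ^+ S by rewrite exprn_gt0.
  lra.
move=> /div64_le_of_expr_le; have := ltn_pmod #|I| (isT : 0 < 64)%N.
have := divn_eq #|I| 64; lia.
Qed.

Section Averaging.
Variables (R : realType) (dm : measure_display) (Omega : measurableType dm).
Variables (P : probability Omega R) (J : finType) (A : J -> set Omega).
Hypothesis mA : forall j, measurable (A j).

Let mindic j : measurable_fun setT (fun w : Omega => (\1_(A j) w : R)%:E).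
Proof. by apply/measurable_EFinP; exact: measurable_indic. Qed.

Lemma integral_sum_indic :
  (\int[P]_(w in setT) (\sum_j (\1_(A j) w)%:E) = \sum_j P (A j))%E.
Proof.
rewrite ge0_integral_sum //.
by apply: eq_bigr => j _; rewrite integral_indic // setIT.
Qed.

Lemma exists_many_events (p q : R) : (0 < #|J|)%N -> q < p ->
  (forall j, p%:E <= P (A j))%E -> exists w, q * #|J|%:R <= \sum_j \1_(A j) w.
Proof.
move=> J_gt0 lt_qp PA.
have [//|few] := pselect (exists w, q * #|J|%:R <= \sum_j \1_(A j) w).
have le_q w : \sum_j \1_(A j) w <= q * #|J|%:R.
  by rewrite leNgt; apply/negP => lt_q; apply: few; exists w; exact: ltW.
have : (\int[P]_(w in setT) (\sum_j (\1_(A j) w)%:E) <= (q * #|J|%:R)%:E)%E.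
  apply: (@le_trans _ _ (\int[P]_(w in setT) (cst (q * #|J|%:R)%:E w))%E).
    apply: ge0_le_integral => //.
    - by move=> w _; rewrite sume_ge0 // => j _; rewrite lee_fin indicE.
    - exact: emeasurable_sum.
    - by move=> w _; rewrite /= sumEFin lee_fin le_q.
  rewrite integral_cst // -[X in (_ <= X)%E]mule1 le_eqVlt; apply/orP; left; apply/eqP.
  by congr (_ * _)%E; exact: probability_setT.
rewrite integral_sum_indic => /(le_trans (lee_sum _ (fun j _ => PA j))).
have sum_p : \sum_(j : J) p = p * #|J|%:R by rewrite sumr_const mulr_natr.
rewrite sumEFin lee_fin sum_p ler_pM2r ?ltr0n //.
by rewrite leNgt lt_qp.
Qed.

End Averaging.

Section Vectors.
Variable R : realType.

Lemma dotvC n (u v : 'rV[R]_n) : dotv u v = dotv v u.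
Proof. by apply: eq_bigr => k _; rewrite mulrC. Qed.

Lemma dotvZl n (r : R) (u v : 'rV[R]_n) : dotv (r *: u) v = r * dotv u v.
Proof. by rewrite /dotv mulr_sumr; apply: eq_bigr => k _; rewrite mxE mulrA. Qed.

Lemma dotvv_ge0 n (u : 'rV[R]_n) : 0 <= dotv u u.
Proof. by rewrite sumr_ge0 // => k _; rewrite -expr2 sqr_ge0. Qed.

Lemma norm2_sqr n (u : 'rV[R]_n) : norm2 u ^+ 2 = dotv u u.
Proof. by rewrite sqr_sqrtr // dotvv_ge0. Qed.

Lemma norm2Z n (r : R) (u : 'rV[R]_n) : norm2 (r *: u) = `|r| * norm2 u.
Proof.
by rewrite /norm2 dotvZl dotvC dotvZl mulrA -expr2 sqrtrM ?sqr_ge0 // sqrtr_sqr.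
Qed.

Lemma chebyshev_sum (T : finType) (F : T -> R) (t : R) : 0 <= t ->
  (\sum_x (t <= `|F x|)%R%:R) * t ^+ 2 <= \sum_x F x ^+ 2.
Proof.
move=> t_ge0; rewrite mulr_suml; apply: ler_sum => x _.
have [le_tF|_] := leP t `|F x|; last by rewrite mul0r sqr_ge0.
by rewrite mul1r -[F x ^+ 2]real_normK ?num_real //; apply: lerXn2r; rewrite ?nnegrE.
Qed.

Lemma chebyshev_coord n (E : 'rV[R]_n) (t : R) : 0 <= t ->
  (\sum_k (t <= `|E 0 k|)%R%:R) * t ^+ 2 <= norm2 E ^+ 2.
Proof.
rewrite norm2_sqr /dotv -(eq_bigr _ (fun k _ => expr2 (E 0 k))).
exact: chebyshev_sum.
Qed.

Lemma expR_le_invr1B (x : R) : x < 1 -> expR x <= (1 - x)^-1.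
Proof.
move=> x_lt1; rewrite -[expR x]invrK lef_pV2 ?posrE ?invr_gt0 ?expR_gt0 ?subr_gt0 //.
by rewrite -expRN expR_ge1Dx.
Qed.

Lemma expR1_le4 : expR 1 <= 4 :> R.
Proof.
have half_le : expR (1 / 2) <= 2 :> R.
  apply: le_trans (expR_le_invr1B _) _; first lra.
  by rewrite (_ : 1 - 1 / 2 = 2^-1) ?invrK //; field.
have -> : expR 1 = expR (1 / 2) ^+ 2 :> R.
  by rewrite -expRM_natr; congr expR; field.
by have := expR_gt0 (1 / 2 : R); nra.
Qed.

End Vectors.

Lemma sign_decode (R : realFieldType) (Z A B a y : R) (b : bool) : 0 < Z ->
  Z * a = A * signb R b + B -> `|B| < A / 2 -> `|a - y| < A / 2 / Z -> (0 < y) = b.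
Proof.
move=> Z_gt0 Za_eq lt_B; rewrite ltr_pdivlMr // -(gtr0_norm Z_gt0) mulrC -normrM mulrBr.
move: lt_B; rewrite !ltr_norml => /andP[B_lo B_hi] /andP[e_lo e_hi].
case: b Za_eq; rewrite /signb => Za_eq.
- have : 0 < Z * y by lra.
  by rewrite pmulr_rgt0.
- have : Z * y < 0 by lra.
  by rewrite pmulr_rlt0 // => /ltW; rewrite leNgt => /negbTE.
Qed.

Section HardInstance.
Variables (R : realType) (N d dk : nat) (rho eps : R) (u : 'I_N -> 'rV[R]_dk).
Hypotheses (N_gt0 : (0 < N)%N) (d_gt0 : (0 < d)%N) (rho_ge2 : 2 <= rho).
Hypotheses (u_unit : forall i, norm2 (u i) = 1)
  (u_sep : forall i h, i != h -> dotv (u i) (u h) <= 1 / rho).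
Hypotheses (eps_gt0 : 0 < eps) (eps_le : eps <= 1 / 1000)
  (N_le_eps : N.-1%:R <= expR rho / eps / 10000)
  (N_le_sqr : N.-1%:R <= expR rho ^+ 2 / 10000).

(* lra ignores these hypotheses when they sit in the context (their order structure is
   inferred along another instance path), so they are always passed to it explicitly. *)
Let rho_gt0 : 0 < rho. Proof. by move: rho_ge2; lra. Qed.

Local Notation L := (expR rho).
Local Notation sqrtd := (Num.sqrt d%:R : R).
Local Notation cube := {ffun 'I_N * 'I_d -> bool}.
Local Notation n := #|{: 'I_N * 'I_d}|.
(* the decoding margin: half the amplitude L / sqrt d of the signal *)
Local Notation tau := (L / sqrtd / 2).

Definition sign_values (x : cube) (i : 'I_N) : 'rV[R]_d :=
  \row_c (signb R (x (i, c)) / sqrtd).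

Definition query j : 'rV[R]_dk := rho *: u j.

Definition weight j i : R := expR (dotv (query j) (u i)).

Definition partition j : R := \sum_i weight j i.

Definition crosstalk (x : cube) j (c : 'I_d) : R :=
  \sum_(i | i != j) weight j i * (signb R (x (i, c)) / sqrtd).

Lemma sqrtd_gt0 : 0 < sqrtd.
Proof. by rewrite sqrtr_gt0 ltr0n. Qed.

Lemma sqrtd_sqr : sqrtd ^+ 2 = d%:R.
Proof. by rewrite sqr_sqrtr ?ler0n. Qed.

Lemma norm2_sign_values x i : norm2 (sign_values x i) = 1.
Proof.
rewrite /norm2 (_ : dotv _ _ = 1) ?sqrtr1 //.
rewrite /dotv (eq_bigr (fun=> d%:R^-1)) => [|c _]; last first.
  by rewrite !mxE -expr2 expr_div_n signb_sqr sqrtd_sqr div1r.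
by rewrite sumr_const card_ord -[_ *+ d]mulr_natr mulVf // pnatr_eq0 -lt0n.
Qed.

Lemma norm2_query j : norm2 (query j) = rho.
Proof. by rewrite norm2Z u_unit mulr1 ger0_norm // ltW. Qed.

Lemma weight_gt0 j i : 0 < weight j i.
Proof. exact: expR_gt0. Qed.

Lemma weight_diag j : weight j j = L.
Proof. by rewrite /weight dotvZl -norm2_sqr u_unit expr1n mulr1. Qed.

Lemma weight_offdiag j i : i != j -> weight j i <= 4.
Proof.
move=> neq_ij; apply: le_trans (expR1_le4 R); rewrite ler_expR dotvZl.
have sep : dotv (u j) (u i) <= 1 / rho by apply: u_sep; rewrite eq_sym.
by move/(ler_wpM2l (ltW rho_gt0)): sep; rewrite mul1r divff ?gt_eqF.
Qed.

Lemma sum_offdiag_const j (k : R) : \sum_(i < N | i != j) k = k * N.-1%:R.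
Proof. by rewrite sumr_const cardC1 card_ord mulr_natr. Qed.

Lemma partitionE j : partition j = L + \sum_(i | i != j) weight j i.
Proof. by rewrite /partition (bigD1 j) //= weight_diag. Qed.

Lemma partition_ge j : L <= partition j.
Proof. by rewrite partitionE lerDl sumr_ge0 // => i _; exact/ltW/weight_gt0. Qed.

Lemma partition_gt0 j : 0 < partition j.
Proof. exact: lt_le_trans (expR_gt0 rho) (partition_ge j). Qed.

Lemma partition_le j : partition j <= L + 4 * N.-1%:R.
Proof.
by rewrite partitionE lerD2l -(sum_offdiag_const j) ler_sum // => i; exact: weight_offdiag.
Qed.

Lemma partition_mul_attn x j c :
  partition j * Attn (query j) u (sign_values x) 0 c =
  L / sqrtd * signb R (x (j, c)) + crosstalk x j c.
Proof.
rewrite /Attn mxE summxE mulrA mulfV ?gt_eqF ?partition_gt0 // mul1r.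
rewrite (bigD1 j) //= !mxE -/(weight j j) weight_diag mulrCA mulrC; congr (_ + _).
by apply: eq_bigr => i _; rewrite !mxE.
Qed.

Lemma sum_crosstalk_sqr j c :
  \sum_(x : cube) crosstalk x j c ^+ 2 =
  2 ^+ n * (\sum_(i | i != j) weight j i ^+ 2) / d%:R.
Proof.
have crosstalkE x :
    crosstalk x j c = (\sum_(i | i != j) weight j i * signb R (x (i, c))) / sqrtd.
  by rewrite /crosstalk mulr_suml; apply: eq_bigr => i _; rewrite mulrA.
under eq_bigr do rewrite crosstalkE expr_div_n sqrtd_sqr.
rewrite -mulr_suml sum_cube_signb_comb_sqr //.
by move=> i k /(congr1 fst).
Qed.

Lemma crosstalk_rarely_large j c :
  \sum_(x : cube) (tau <= `|crosstalk x j c|)%R%:R <= 2 ^+ n * (64 / 10000) :> R.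
Proof.
have L_gt0 := expR_gt0 rho; have sqrtd_pos := sqrtd_gt0.
have d_pos : (0 : R) < d%:R by rewrite ltr0n.
have two_n_gt0 : (0 : R) < 2 ^+ n by rewrite exprn_gt0.
have sum_w_le : \sum_(i | i != j) weight j i ^+ 2 <= 16 * N.-1%:R.
  rewrite -(sum_offdiag_const j); apply: ler_sum => i neq_ij.
  have := weight_offdiag neq_ij; have := weight_gt0 j i; nra.
have A_le : \sum_(i | i != j) weight j i ^+ 2 <= 16 * (L ^+ 2 / 10000).
  by move: sum_w_le N_le_sqr; lra.
have tau_ge0 : 0 <= L / sqrtd / 2 by rewrite !divr_ge0 // ltW.
have := chebyshev_sum (fun x => crosstalk x j c) tau_ge0.
rewrite sum_crosstalk_sqr !expr_div_n sqrtd_sqr; set S := \sum_x _ => cheb.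
have dinv_ge0 : 0 <= d%:R^-1 :> R by rewrite invr_ge0 ler0n.
have K_gt0 : 0 < L ^+ 2 / d%:R by rewrite divr_gt0 ?exprn_gt0.
rewrite -(ler_pM2r K_gt0).
have := ler_wpM2r dinv_ge0 (ler_wpM2l (ltW two_n_gt0) A_le).
move: cheb; lra.
Qed.

Lemma error_rarely_large (Z : R) (E : 'rV[R]_d) :
  0 < Z -> Z <= L + 4 * N.-1%:R -> norm2 E <= eps ->
  \sum_c (tau / Z <= `|E 0 c|)%R%:R <= d%:R / 1000 :> R.
Proof.
move=> Z_gt0 Z_le E_le.
have L_gt0 := expR_gt0 rho; have d_pos : (0 : R) < d%:R by rewrite ltr0n.
have epsN : eps * N.-1%:R <= L / 10000.
  have := ler_wpM2l (ltW eps_gt0) N_le_eps.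
  by rewrite (_ : eps * (L / eps / 10000) = L / 10000) //; field; rewrite gt_eqF.
have epsZ : eps * Z <= 14 / 10000 * L.
  have := ler_wpM2l (ltW eps_gt0) Z_le; have := ler_wpM2r (ltW L_gt0) eps_le.
  by move: epsN; lra.
have epsZ_ge0 : 0 <= eps * Z by rewrite mulr_ge0 // ltW.
have cL_ge0 : 0 <= 14 / 10000 * L by lra.
have epsZ_sqr : (eps * Z) ^+ 2 <= (14 / 10000 * L) ^+ 2.
  by rewrite ler_sqr ?nnegrE ?epsZ_ge0 ?cL_ge0.
have theta_ge0 : 0 <= L / sqrtd / 2 / Z by rewrite !divr_ge0 // ltW // sqrtd_gt0.
have := chebyshev_coord E theta_ge0.
rewrite !expr_div_n sqrtd_sqr; set S := \sum_c _ => cheb.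
have normE_sqr : norm2 E ^+ 2 <= eps ^+ 2.
  by rewrite ler_sqr ?nnegrE ?sqrtr_ge0 // ltW.
have := ler_wpM2r (sqr_ge0 Z) (le_trans cheb normE_sqr).
rewrite -exprMn (_ : S * _ * _ = S * (L ^+ 2 / d%:R) / 4); last first.
  by field; rewrite !gt_eqF.
have K_gt0 : 0 < L ^+ 2 / d%:R by rewrite divr_gt0 ?exprn_gt0.
move=> scaled; rewrite -(ler_pM2r K_gt0) (_ : d%:R / 1000 * _ = L ^+ 2 / 1000); last first.
  by field; rewrite gt_eqF.
by move: scaled epsZ_sqr (sqr_ge0 L); lra.
Qed.

Lemma sign_recovered x j c (yv : 'rV[R]_d) :
  `|crosstalk x j c| < tau ->
  `|(Attn (query j) u (sign_values x) - yv) 0 c| < tau / partition j ->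
  (0 < yv 0 c) = x (j, c).
Proof.
have -> : (Attn (query j) u (sign_values x) - yv) 0 c =
    Attn (query j) u (sign_values x) 0 c - yv 0 c by rewrite !mxE.
exact: sign_decode (partition_gt0 j) (partition_mul_attn x j c).
Qed.

(* A bit is read off correctly unless the crosstalk or the error of the answer at that
   coordinate uses up its share of the margin [tau]. *)
Lemma bit_recovered_ge x j c (yv : 'rV[R]_d) (ok : bool) :
  ok%:R - (tau <= `|crosstalk x j c|)%R%:R -
    ok%:R * (tau / partition j <= `|(Attn (query j) u (sign_values x) - yv) 0 c|)%R%:R
  <= ((0 < yv 0 c)%R == x (j, c))%:R :> R.
Proof.
set err := (Attn _ _ _ - yv) 0 c.
have := ler0n R ((0 < yv 0 c)%R == x (j, c)); have := ler0n R (tau / partition j <= `|err|)%R.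
have [_|small_B] := leP tau `|crosstalk x j c|; first by case: ok => /=; lra.
have [_|small_err] := leP (tau / partition j) `|err|; first by case: ok => /=; lra.
by rewrite (sign_recovered small_B small_err) eqxx; case: ok => /=; lra.
Qed.

Lemma sum_large_crosstalk_le :
  \sum_(x : cube) \sum_j \sum_c (tau <= `|crosstalk x j c|)%R%:R <=
  N%:R * (d%:R * (2 ^+ n * (64 / 10000))) :> R.
Proof.
rewrite exchange_big /=; under eq_bigr do rewrite exchange_big /=.
apply: (@le_trans _ _ (\sum_(j < N) \sum_(c < d) 2 ^+ n * (64 / 10000))).
  by apply: ler_sum => j _; apply: ler_sum => c _; exact: crosstalk_rarely_large.
by rewrite !sumr_const !card_ord -[_ *+ d]mulr_natl -[_ *+ N]mulr_natl.
Qed.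

Lemma sum_large_error_le (y : cube -> 'I_N -> 'rV[R]_d) (ok : cube -> 'I_N -> bool) :
  (forall x j, ok x j -> norm2 (Attn (query j) u (sign_values x) - y x j) <= eps) ->
  \sum_(x : cube) \sum_j \sum_c (ok x j)%:R *
    (tau / partition j <= `|(Attn (query j) u (sign_values x) - y x j) 0 c|)%R%:R
  <= d%:R / 1000 * \sum_(x : cube) \sum_j (ok x j)%:R :> R.
Proof.
move=> ok_err; rewrite mulr_sumr; apply: ler_sum => x _; rewrite mulr_sumr.
apply: ler_sum => j _; rewrite -mulr_sumr mulrC.
have [ok_xj|_] := boolP (ok x j); last by rewrite !mulr0.
by rewrite !mulr1; apply: error_rarely_large (partition_gt0 j) (partition_le j) (ok_err _ _ ok_xj).
Qed.

Lemma sum_recovered (y : cube -> 'I_N -> 'rV[R]_d) (ok : cube -> 'I_N -> bool) :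
  (forall x j, ok x j -> norm2 (Attn (query j) u (sign_values x) - y x j) <= eps) ->
  33 / 50 * (2 ^+ n * N%:R) <= \sum_(x : cube) \sum_j (ok x j)%:R :> R ->
  5 / 8 * n%:R * 2 ^+ n <=
    \sum_(x : cube) \sum_j \sum_c ((0 < y x j 0 c)%R == x (j, c))%:R :> R.
Proof.
move=> ok_err many_ok.
pose err x j c := (Attn (query j) u (sign_values x) - y x j) 0 c.
pose Ok x j : R := (ok x j)%:R.
pose large_crosstalk x j c : R := (tau <= `|crosstalk x j c|)%R%:R.
pose large_err x j c : R := (tau / partition j <= `|err x j c|)%R%:R.
apply: le_trans (_ : _ <= \sum_(x : cube) \sum_j \sum_c
    (Ok x j - large_crosstalk x j c - Ok x j * large_err x j c)) _; last first.
  by do 3![apply: ler_sum => ? _]; exact: bit_recovered_ge.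
have -> : \sum_(x : cube) \sum_j \sum_c
      (Ok x j - large_crosstalk x j c - Ok x j * large_err x j c) =
    \sum_(x : cube) \sum_j \sum_(c < d) Ok x j
    - \sum_(x : cube) \sum_j \sum_c large_crosstalk x j c
    - \sum_(x : cube) \sum_j \sum_c Ok x j * large_err x j c.
  rewrite -!sumrB; apply: eq_bigr => x _; rewrite -!sumrB.
  by apply: eq_bigr => j _; rewrite -!sumrB.
have -> : \sum_(x : cube) \sum_j \sum_(c < d) Ok x j = d%:R * \sum_(x : cube) \sum_j Ok x j.
  rewrite mulr_sumr; apply: eq_bigr => x _; rewrite mulr_sumr.
  by apply: eq_bigr => j _; rewrite sumr_const card_ord mulr_natl.
have n_eq : n%:R = N%:R * d%:R :> R by rewrite card_prod !card_ord natrM.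
have crosstalk_le : \sum_(x : cube) \sum_j \sum_c large_crosstalk x j c <=
    N%:R * (d%:R * (2 ^+ n * (64 / 10000))) := sum_large_crosstalk_le.
have err_le : \sum_(x : cube) \sum_j \sum_c Ok x j * large_err x j c <=
    d%:R / 1000 * \sum_(x : cube) \sum_j Ok x j := sum_large_error_le ok_err.
have := ler_wpM2l (ler0n R d) many_ok.
move: crosstalk_le err_le; rewrite n_eq; set SA := \sum_(x : cube) \sum_j Ok x j.
have : 0 <= N%:R * d%:R * 2 ^+ n :> R by rewrite !mulr_ge0 ?ler0n ?exprn_ge0.
lra.
Qed.

Lemma sketch_size_ge (dm : measure_display) (Omega : measurableType dm)
    (P : probability Omega R) (S : nat)
    (enc : forall n, Omega -> ('I_n -> 'rV[R]_dk) -> ('I_n -> 'rV[R]_d) -> seq bool)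
    (dec : Omega -> seq bool -> 'rV[R]_dk -> 'rV[R]_d) :
  valid_sketch P rho eps S enc dec -> (N * d <= 576 * S)%N.
Proof.
move=> [enc_le enc_ok].
have u_le i : norm2 (u i) <= 1 by rewrite u_unit.
have V_le x i : norm2 (sign_values x i) <= 1 by rewrite norm2_sign_values.
have q_le j : norm2 (query j) <= rho by rewrite norm2_query.
have [A A_ok] := choice (fun p : cube * 'I_N =>
  enc_ok _ _ _ _ N_gt0 u_le (V_le p.1) (q_le p.2)).
have [|||w many] := @exists_many_events R _ _ P _ A (fun p => (A_ok p).1) (2 / 3) (33 / 50).
- by rewrite card_prod card_ord muln_gt0 N_gt0 andbT; apply/card_gt0P; exists [ffun=> true].
- lra.
- exact: (fun p => (A_ok p).2.2).
pose g (m : seq bool) : cube := [ffun p => 0 < dec w m (query p.1) 0 p.2].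
rewrite -[N in (N * _)%N](card_ord N) -[d in (_ * d)%N](card_ord d) -card_prod.
apply: (@encoding_length R _ S (fun x => enc N w u (sign_values x)) g) => [x|].
  exact: enc_le.
apply: le_trans (@sum_recovered (fun x j => dec w (enc N w u (sign_values x)) (query j))
  (fun x j => w \in A (x, j)) _ _) _.
- by move=> x j; rewrite in_setE => /((A_ok (x, j)).2.1 w).
- move: many; rewrite card_prod card_ffun card_bool card_ord natrM natrX pair_big /=.
  suff -> : \sum_p \1_(A p) w = \sum_p (w \in A (p.1, p.2))%:R :> R by [].
  by apply: eq_bigr => -[x j] _; rewrite indicE.
- apply: ler_sum => x _; rewrite agreeE pair_big /=.
  by apply: ler_sum => -[j c] _; rewrite ffunE.
Qed.

End HardInstance.

Lemma exists_nat_near (R : realType) (x y : R) : 0 <= x -> x <= y -> 1 <= y ->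
  exists N : nat, [/\ (0 < N)%N, N.-1%:R <= x, N%:R <= y & x <= 2 * N%:R].
Proof.
move=> x_ge0 le_xy y_ge1.
have t_le : (Num.trunc x)%:R <= x by rewrite truncn_le.
have t_gt : x < (Num.trunc x).+1%:R by apply: truncnS_gt.
have [t0|t_gt0] := posnP (Num.trunc x).
  by exists 1%N; rewrite t0 in t_gt; split => //=; lra.
exists (Num.trunc x); split => //; first by apply: le_trans t_le; rewrite ler_nat leq_pred.
  exact: le_trans t_le le_xy.
have : 1 <= (Num.trunc x)%:R :> R by rewrite ler1n.
by move: t_gt; rewrite -natr1; lra.
Qed.

Theorem theorem10 (R : realType) (a : R) (ha : 0 < a) (hpack : packing_constant a) :
  exists eps0 : R, 0 < eps0 /\ exists C : R, 0 < C /\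
  forall (d dk : nat) (rho eps : R), (1 < d)%N -> (1 < dk)%N -> 2 <= rho ->
  0 < eps -> eps <= eps0 ->
  forall (dm : measure_display) (Omega : measurableType dm) (P : probability Omega R)
    (S : nat)
    (enc : forall n : nat, Omega -> ('I_n -> 'rV[R]_dk) -> ('I_n -> 'rV[R]_d) -> seq bool)
    (dec : Omega -> seq bool -> 'rV[R]_dk -> 'rV[R]_d),
  valid_sketch P rho eps S enc dec ->
  let L := expR rho in
  C * d%:R * Num.min (L / eps) (Num.min (L ^+ 2) (expR (a * dk%:R / (ln L) ^+ 2)))
    <= S%:R.
Proof.
exists (1 / 1000); split; first lra.
(* N >= M / (2 * 10^4) and N * d <= 576 S *)
exists (1 / 10000 / 1152); split; first lra.
move=> d dk rho eps d_gt1 dk_gt1 rho_ge2 eps_gt0 eps_le dm Omega P S enc dec sketch.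
cbv zeta; rewrite expRK; set L := expR rho; set E := expR _; set M := Num.min _ _.
have rho_gt0 : 0 < rho by move: rho_ge2; lra.
have E_ge1 : 1 <= E by rewrite -expR0 ler_expR divr_ge0 ?mulr_ge0 ?ler0n ?exprn_ge0 // ltW.
have [M_le_eps M_le_sqr M_le_E] : [/\ M <= L / eps, M <= L ^+ 2 & M <= E].
  by rewrite /M !ge_min !lexx !orbT.
have M_ge0 : 0 <= M by rewrite /M !le_min !mulr_ge0 ?exprn_ge0 ?invr_ge0 ?expR_ge0 ?ltW.
have cM_le_E : M / 10000 <= E by move: M_le_E M_ge0; lra.
have [N [N_gt0 N_le N_le_E M_le_N]] :=
  exists_nat_near (divr_ge0 M_ge0 (ler0n _ _)) cM_le_E E_ge1.
have [|||u [u_unit u_sep]] := hpack dk (1 / rho) (ltnW dk_gt1) _ _ N.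
- by rewrite divr_gt0.
- by move: rho_ge2; rewrite ler_pdivrMr //; lra.
- by rewrite expr_div_n expr1n div1r mulrAC.
have N_le_eps : N.-1%:R <= L / eps / 10000 by move: N_le M_le_eps; lra.
have N_le_sqr : N.-1%:R <= L ^+ 2 / 10000 by move: N_le M_le_sqr; lra.
have := sketch_size_ge N_gt0 (ltnW d_gt1) rho_ge2 u_unit u_sep eps_gt0 eps_le
  N_le_eps N_le_sqr sketch.
rewrite -(ler_nat R) !natrM => Nd_le.
by move: Nd_le (ler_wpM2r (ler0n R d) M_le_N); lra.
Qed.
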